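(* Let $r\ge1$ and $f\in H^{r+p(r)}(\mathbb T)$. Then for all $\tau>0$, $$\|P_1^\tau(f)\|_r\le C\tau^2\|f\|_{r+p(r)}^2,$$ with $C$ independent of $\tau$ and $f$, where $$P_1^\tau(f)=\sum_{k\neq0}\sum_{k_1+k_2=k}\frac{k_1^2}{k^2}\int_0^\tau\big(e^{-2isk_2^2}-1\big)\big(e^{-2iskk_1}-1\big)ds\,\widehat{\bar f}_{k_1}\widehat{\bar f}_{k_2}e^{ikx}.$$
   Context: $\mathbb{T}=[-\pi,\pi]$ periodic; $\widehat f_k=\frac1{2\pi}\int_{\mathbb T}f(x)e^{-ikx}dx$; $\|f\|_s^2=\sum_k(1+k^2)^s|\widehat f_k|^2$ is the $H^s$ norm; $\bar f$ is the complex conjugate. The function $p$ on $[1,\infty)$: $p(1)=1$; $p(r)=(3-2r)+$ for $1<r\le7/6$; $p(r)=2/3$ for $7/6<r\le17/12$; $p(r)=(7/2-2r)+$ for $17/12<r\le3/2$; $p(r)=5/4-r/2$ for $3/2<r<5/2$; $p(5/2)=0+$; $p(r)=0$ for $r>5/2$. Here $c+$ means: the statement holds with $c+\varepsilon$ in place of $p(r)$ for every sufficiently small $\varepsilon>0$ (the constant may then depend on $\varepsilon$). *)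

From Stdlib Require Import Reals ZArith Lra.
From Coquelicot Require Import Coquelicot.
Open Scope R_scope.

(* Sum over Z of a real sequence, enumerated as 0, -1, 1, -2, 2, ... (paired) *)
Definition zpair (a : Z -> R) (n : nat) : R :=
  a (Z.of_nat n) + a (- Z.of_nat (S n))%Z.
Definition zsummable (a : Z -> R) : Prop := ex_series (zpair a).
Definition zsum (a : Z -> R) : R := Series (zpair a).

Definition zsumC (a : Z -> C) : C :=
  (zsum (fun k => Re (a k)), zsum (fun k => Im (a k))).

Definition sob_w (s : R) (k : Z) : R := Rpower (1 + IZR k ^ 2) s.

(* A Fourier coefficient sequence c (c k = \hat g_k) lies in H^s(T) *)
Definition inH (s : R) (c : Z -> C) : Prop :=
  zsummable (fun k => sob_w s k * Cmod (c k) ^ 2).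

Definition Hnorm2 (s : R) (c : Z -> C) : R :=
  zsum (fun k => sob_w s k * Cmod (c k) ^ 2).
Definition Hnorm (s : R) (c : Z -> C) : R := sqrt (Hnorm2 s c).

(* Fourier coefficients of the conjugate: \hat{\bar f}_k = conj (\hat f_{-k}) *)
Definition conj_coef (fh : Z -> C) (k : Z) : C := Cconj (fh (- k)%Z).

Definition cexpi (t : R) : C := (cos t, sin t).

Definition Iphase (tau : R) (k k1 k2 : Z) : C :=
  RInt (V := C_R_CompleteNormedModule)
    (fun s => (cexpi (-2 * s * IZR k2 ^ 2) - 1) * (cexpi (-2 * s * IZR k * IZR k1) - 1))%C
    0 tau.

Definition P1coef (tau : R) (fh : Z -> C) (k : Z) : C :=
  if Z.eqb k 0 then 0%C else
  zsumC (fun k1 =>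
    let k2 := (k - k1)%Z in
    (RtoC (IZR k1 ^ 2 / IZR k ^ 2) * Iphase tau k k1 k2
      * conj_coef fh k1 * conj_coef fh k2)%C).

(* The exponent function p(r): base value and whether it carries a "+" *)
Definition p_base (r : R) : R :=
  if Rle_dec r 1 then 1
  else if Rle_dec r (7/6) then 3 - 2 * r
  else if Rle_dec r (17/12) then 2/3
  else if Rle_dec r (3/2) then 7/2 - 2 * r
  else if Rlt_dec r (5/2) then 5/4 - r / 2
  else 0.
Definition p_plus (r : R) : bool :=
  if Rle_dec r 1 then false
  else if Rle_dec r (7/6) then true
  else if Rle_dec r (17/12) then false
  else if Rle_dec r (3/2) then true
  else if Rlt_dec r (5/2) then false
  else if Rle_dec r (5/2) then true
  else false.
(* p(r) with the "+" realized by eps *)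
Definition p_eps (r eps : R) : R :=
  p_base r + (if p_plus r then eps else 0).

(* Write b_j = |(conj f)^_j|, <j>^2 = 1 + j^2 and k2 = k - k1.  Since |e^{it} - 1| <= min(|t|, 2),
   the phase integral is at most 4 tau^2 min(k2^2, |k k1|), so the k-th coefficient of P_1^tau(f)
   is at most 4 tau^2 sum_{k1} m(k,k1) b_{k1} b_{k2} with m(k,k1) = (k1^2/k^2) min(k2^2, |k k1|).
   Cauchy-Schwarz with the weights <k1>^{2s} <k2>^{2s} gives
     <k>^{2r} |P_k|^2 <= 32 tau^4 (sum_{k1} K(k,k1)) (sum_{k1} W_{k1} W_{k2}),
   where W_j = <j>^{2s} b_j^2 and K(k,k1) = <k>^{2r} m(k,k1)^2 <k1>^{-2s} <k2>^{-2s}; summing over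
   k bounds ||P_1^tau(f)||_r^2 by 32 tau^4 (sup_k sum_{k1} K(k,k1)) ||f||_s^4.  The kernel sum is
   bounded uniformly in k by splitting it into the regions |k2| <= min(|k|, |k1|), |k1| <= |k|
   and |k| < |k1| (where |k1| <= 2 |k2|) and comparing the lattice sums of <j>^{2e} with
   integrals; this works as soon as r <= s, r + 5/2 <= 2s, s > 7/4 and s <> 5/2, which holds for
   s = r + p(r). *)

From Stdlib Require Import Reals ZArith Lra Lia.
From Coquelicot Require Import Coquelicot.
Open Scope R_scope.

(** * Sums over integer intervals and over Z *)

Fixpoint isum (a : Z -> R) (lo : Z) (n : nat) : R :=
  match n with O => 0 | S n' => isum a lo n' + a (lo + Z.of_nat n')%Z end.

Lemma isum_S a lo n : isum a lo (S n) = isum a lo n + a (lo + Z.of_nat n)%Z.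
Proof. reflexivity. Qed.

Lemma isum_ext a b lo n : (forall x, a x = b x) -> isum a lo n = isum b lo n.
Proof. intros H; induction n as [|n IH]; simpl; [lra | rewrite IH, H; lra]. Qed.

Lemma isum_le a b lo n :
  (forall i, (i < n)%nat -> a (lo + Z.of_nat i)%Z <= b (lo + Z.of_nat i)%Z) ->
  isum a lo n <= isum b lo n.
Proof.
  induction n as [|n IH]; intros H; simpl; [lra|].
  apply Rplus_le_compat; [apply IH; intros; apply H | apply H]; lia.
Qed.

Lemma isum_nonneg a lo n : (forall x, 0 <= a x) -> 0 <= isum a lo n.
Proof. intros H; induction n; simpl; [lra | specialize (H (lo + Z.of_nat n)%Z); lra]. Qed.

Lemma isum_plus a b lo n :
  isum (fun x => a x + b x) lo n = isum a lo n + isum b lo n.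
Proof. induction n; simpl; lra. Qed.

Lemma isum_scal c a lo n : isum (fun x => c * a x) lo n = c * isum a lo n.
Proof. induction n as [|n IH]; simpl; [lra | rewrite IH; lra]. Qed.

Lemma isum_const c lo n : isum (fun _ => c) lo n = INR n * c.
Proof. induction n as [|n IH]; simpl isum; [simpl; ring | rewrite IH, S_INR; ring]. Qed.

Lemma isum_app a lo n m :
  isum a lo (n + m) = isum a lo n + isum a (lo + Z.of_nat n) m.
Proof.
  induction m as [|m IH]; simpl.
  - rewrite Nat.add_0_r; lra.
  - rewrite Nat.add_succ_r; simpl; rewrite IH.
    replace (lo + Z.of_nat (n + m))%Z with (lo + Z.of_nat n + Z.of_nat m)%Z by lia.
    lra.
Qed.

Lemma isum_cons a lo n : isum a lo (S n) = a lo + isum a (lo + 1) n.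
Proof.
  change (S n) with (1 + n)%nat; rewrite isum_app; simpl.
  replace (lo + 0)%Z with lo by lia; lra.
Qed.

Lemma isum_reflect a k lo n :
  isum (fun x => a (k - x)%Z) lo n = isum a (k - lo - Z.of_nat n + 1) n.
Proof.
  induction n as [|n IH]; [reflexivity|].
  rewrite isum_S, IH, isum_cons.
  replace (k - lo - Z.of_nat (S n) + 1)%Z with (k - lo - Z.of_nat n)%Z by lia.
  replace (k - (lo + Z.of_nat n))%Z with (k - lo - Z.of_nat n)%Z by lia.
  lra.
Qed.

Lemma isum_shift a d lo n : isum (fun x => a (x - d)%Z) lo n = isum a (lo - d) n.
Proof.
  induction n as [|n IH]; [reflexivity|].
  rewrite !isum_S, IH.
  replace (lo + Z.of_nat n - d)%Z with (lo - d + Z.of_nat n)%Z by lia; reflexivity.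
Qed.

Lemma isum_zero_le a lo n :
  (forall i, (i < n)%nat -> a (lo + Z.of_nat i)%Z <= 0) -> isum a lo n <= 0.
Proof.
  intros H; apply Rle_trans with (isum (fun _ => 0) lo n).
  - apply isum_le; auto.
  - rewrite isum_const; lra.
Qed.

Section NonnegSums.

Variable a : Z -> R.
Hypothesis a_nonneg : forall x, 0 <= a x.

Lemma isum_subinterval lo n lo' n' :
  (lo' <= lo)%Z -> (lo + Z.of_nat n <= lo' + Z.of_nat n')%Z ->
  isum a lo n <= isum a lo' n'.
Proof.
  intros H1 H2.
  assert (E : exists d1 d2, n' = (d1 + n + d2)%nat /\ lo = (lo' + Z.of_nat d1)%Z).
  { exists (Z.to_nat (lo - lo')), (Z.to_nat (lo' + Z.of_nat n' - lo - Z.of_nat n)).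
    lia. }
  destruct E as [d1 [d2 [-> ->]]].
  rewrite !isum_app, Nat2Z.inj_add, Z.add_assoc.
  pose proof (isum_nonneg a lo' d1 a_nonneg).
  pose proof (isum_nonneg a (lo' + Z.of_nat d1 + Z.of_nat n) d2 a_nonneg).
  lra.
Qed.

Lemma isum_le_of_symmetric B :
  (forall M, isum a (- Z.of_nat M) (2 * M + 1) <= B) -> forall lo n, isum a lo n <= B.
Proof.
  intros HB lo n.
  apply Rle_trans with (2 := HB (Z.abs_nat lo + n)%nat).
  apply isum_subinterval; lia.
Qed.

Lemma isum_le_of_support lo' n' :
  (forall x, (x < lo' \/ lo' + Z.of_nat n' <= x)%Z -> a x = 0) ->
  forall lo n, isum a lo n <= isum a lo' n'.
Proof.
  intros Hs lo n.
  set (lo2 := Z.min lo lo').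
  set (d1 := Z.to_nat (lo' - lo2)).
  set (d2 := Z.to_nat (Z.max (lo + Z.of_nat n) (lo' + Z.of_nat n') - lo' - Z.of_nat n')).
  apply Rle_trans with (isum a lo2 (d1 + n' + d2)).
  { apply isum_subinterval; unfold lo2, d1, d2; lia. }
  rewrite !isum_app.
  replace (lo2 + Z.of_nat d1)%Z with lo' by (unfold d1, lo2; lia).
  replace (lo2 + Z.of_nat (d1 + n'))%Z with (lo' + Z.of_nat n')%Z by (unfold d1, lo2; lia).
  assert (isum a lo2 d1 <= 0).
  { apply isum_zero_le; intros i Hi; rewrite Hs; [lra|]. left; unfold d1, lo2 in *; lia. }
  assert (isum a (lo' + Z.of_nat n') d2 <= 0).
  { apply isum_zero_le; intros i Hi; rewrite Hs; [lra|]. right; lia. }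
  lra.
Qed.

Hypothesis a_even : forall x, a (- x)%Z = a x.

Lemma isum_symmetric_le M :
  isum a (- Z.of_nat M) (2 * M + 1) <= 2 * isum a 0 (S M).
Proof.
  replace (2 * M + 1)%nat with (M + S M)%nat by lia.
  rewrite isum_app; replace (- Z.of_nat M + Z.of_nat M)%Z with 0%Z by lia.
  assert (isum a (- Z.of_nat M) M <= isum a 0 (S M)).
  { rewrite (isum_ext a (fun x => a (0 - x)%Z))
      by (intros x; rewrite <- a_even; f_equal; lia).
    rewrite isum_reflect; apply isum_subinterval; lia. }
  lra.
Qed.

End NonnegSums.

Lemma sum_n_zpair a N : sum_n (zpair a) N = isum a (- Z.of_nat N - 1) (2 * N + 2).
Proof.
  induction N as [|N IH].
  - rewrite sum_O; unfold zpair; simpl; lra.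
  - rewrite sum_Sn, IH.
    replace (2 * S N + 2)%nat with (S (S (2 * N + 2))) by lia.
    rewrite isum_cons, isum_S; unfold zpair; change plus with Rplus.
    replace (- Z.of_nat (S N) - 1 + 1)%Z with (- Z.of_nat N - 1)%Z by lia.
    replace (- Z.of_nat N - 1 + Z.of_nat (2 * N + 2))%Z with (Z.of_nat (S N)) by lia.
    replace (- Z.of_nat (S (S N)))%Z with (- Z.of_nat (S N) - 1)%Z by lia.
    lra.
Qed.

Section NonnegZsum.

Variable a : Z -> R.
Hypothesis a_nonneg : forall x, 0 <= a x.

Let sum_n_zpair_incr n : sum_n (zpair a) n <= sum_n (zpair a) (S n).
Proof.
  rewrite sum_Sn; unfold zpair; change plus with Rplus.
  pose proof (a_nonneg (Z.of_nat (S n))); pose proof (a_nonneg (- Z.of_nat (S (S n)))%Z).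
  lra.
Qed.

Lemma zsum_le B : (forall lo n, isum a lo n <= B) -> zsummable a /\ zsum a <= B.
Proof.
  intros HB.
  assert (Hb : forall n, sum_n (zpair a) n <= B) by (intros n; rewrite sum_n_zpair; apply HB).
  destruct (ex_finite_lim_seq_incr _ B sum_n_zpair_incr Hb) as [l Hl].
  assert (Hs : is_series (zpair a) l) by exact Hl.
  split; [exists l; exact Hs|].
  unfold zsum; rewrite (is_series_unique _ _ Hs).
  apply (is_lim_seq_le (sum_n (zpair a)) (fun _ => B) l B); auto.
  apply is_lim_seq_const.
Qed.

Lemma isum_le_zsum lo n : zsummable a -> isum a lo n <= zsum a.
Proof.
  intros [l Hl].
  unfold zsum; rewrite (is_series_unique _ _ Hl).
  pose proof (is_lim_seq_incr_compare _ l Hl sum_n_zpair_incr (Z.abs_nat lo + n)) as H.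
  rewrite sum_n_zpair in H; eapply Rle_trans; [|exact H].
  apply isum_subinterval; auto; lia.
Qed.

Lemma zsum_nonneg : zsummable a -> 0 <= zsum a.
Proof. exact (isum_le_zsum 0 0). Qed.

End NonnegZsum.

Lemma zsum_abs_le g h B : (forall x, Rabs (g x) <= h x) ->
  (forall lo n, isum h lo n <= B) -> zsummable g /\ Rabs (zsum g) <= B.
Proof.
  intros Hg HB.
  assert (Hh : forall x, 0 <= h x) by (intros x; eapply Rle_trans; [apply Rabs_pos | apply Hg]).
  destruct (zsum_le h Hh B HB) as [Hs Hz].
  assert (Hn : forall n, Rabs (zpair g n) <= zpair h n).
  { intros n; unfold zpair.
    eapply Rle_trans; [apply Rabs_triang | apply Rplus_le_compat; apply Hg]. }
  assert (Habs : ex_series (fun n => Rabs (zpair g n))).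
  { apply (ex_series_le (K := R_AbsRing) (V := R_CompleteNormedModule) _ (zpair h));
      [|exact Hs].
    intros n; change norm with Rabs; rewrite Rabs_Rabsolu; apply Hn. }
  split.
  - apply ex_series_Rabs, Habs.
  - unfold zsum; eapply Rle_trans; [apply Series_Rabs, Habs|].
    eapply Rle_trans; [apply Series_le; [|exact Hs] | exact Hz].
    intros n; split; [apply Rabs_pos | apply Hn].
Qed.

Lemma Cmod_zsumC_le g h B : (forall x, Cmod (g x) <= h x) ->
  (forall lo n, isum h lo n <= B) -> Cmod (zsumC g) <= sqrt 2 * B.
Proof.
  intros Hg HB.
  assert (Hre : forall x, Rabs (Re (g x)) <= h x)
    by (intros x; eapply Rle_trans; [apply re_le_Cmod | apply Hg]).
  assert (Him : forall x, Rabs (Im (g x)) <= h x).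
  { intros x; eapply Rle_trans; [|apply Hg].
    rewrite <- (Rabs_pos_eq (Cmod (g x))) by apply Cmod_ge_0.
    apply Rsqr_le_abs_0; pose proof (Cmod2_alt (g x)); unfold Rsqr; nra. }
  destruct (zsum_abs_le _ _ _ Hre HB) as [_ H1].
  destruct (zsum_abs_le _ _ _ Him HB) as [_ H2].
  eapply Rle_trans; [apply Cmod_2Rmax|].
  apply Rmult_le_compat_l; [apply sqrt_pos | apply Rmax_lub; assumption].
Qed.

Lemma zsum_plus a b : zsummable a -> zsummable b ->
  zsummable (fun x => a x + b x) /\ zsum (fun x => a x + b x) = zsum a + zsum b.
Proof.
  intros Ha Hb.
  assert (E : forall n, zpair (fun x => a x + b x) n = plus (zpair a n) (zpair b n)).
  { intros n; unfold zpair; change plus with Rplus; ring. }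
  split.
  - unfold zsummable; eapply ex_series_ext; [intros n; symmetry; apply E|].
    apply (ex_series_plus (K := R_AbsRing) (V := R_NormedModule)); auto.
  - unfold zsum; rewrite (Series_ext _ _ E); apply Series_plus; auto.
Qed.

Lemma zsum_isum (F : Z -> Z -> R) lo n : (forall k, zsummable (F k)) ->
  zsummable (fun x => isum (fun k => F k x) lo n) /\
  zsum (fun x => isum (fun k => F k x) lo n) = isum (fun k => zsum (F k)) lo n.
Proof.
  intros HF; induction n as [|n [IHs IHe]].
  - assert (H0 : forall x : Z, 0 <= 0) by (intros; lra).
    destruct (zsum_le _ H0 0) as [Hs Hz]; [intros; rewrite isum_const; lra|].
    pose proof (zsum_nonneg _ H0 Hs); split; [exact Hs | simpl; lra].
  - destruct (zsum_plus _ _ IHs (HF (lo + Z.of_nat n)%Z)) as [Hs He].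
    split; [exact Hs|]. rewrite isum_S, <- IHe, <- He; reflexivity.
Qed.

Lemma discriminant_le a b c :
  0 <= a -> (forall t, 0 <= a * t ^ 2 - 2 * b * t + c) -> b ^ 2 <= a * c.
Proof.
  intros Ha H.
  destruct (Req_dec a 0) as [->|Ha0].
  - destruct (Req_dec b 0) as [->|Hb]; [specialize (H 0); lra|].
    specialize (H ((c + 1) / (2 * b))).
    replace (0 * ((c + 1) / (2 * b)) ^ 2 - 2 * b * ((c + 1) / (2 * b)) + c) with (-1)
      in H by (field; lra).
    lra.
  - specialize (H (b / a)).
    replace (a * (b / a) ^ 2 - 2 * b * (b / a) + c) with ((a * c - b ^ 2) / a)
      in H by (field; lra).
    apply Rmult_le_compat_r with (r := a) in H; [|lra].
    unfold Rdiv in H; rewrite Rmult_0_l, Rmult_assoc, Rinv_l in H by lra; lra.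
Qed.

Lemma isum_cauchy_schwarz x y w lo n : (forall j, 0 < w j) ->
  isum (fun j => x j * y j) lo n ^ 2
    <= isum (fun j => x j ^ 2 / w j) lo n * isum (fun j => w j * y j ^ 2) lo n.
Proof.
  intros Hw; apply discriminant_le.
  - apply isum_nonneg; intros j; specialize (Hw j).
    apply Rmult_le_pos; [nra | left; apply Rinv_0_lt_compat; lra].
  - intros t.
    replace (_ - 2 * _ * t + _) with
      (isum (fun j => t ^ 2 * (x j ^ 2 / w j) + -2 * t * (x j * y j) + w j * y j ^ 2) lo n)
      by (rewrite !isum_plus, !isum_scal; ring).
    apply isum_nonneg; intros j; specialize (Hw j).
    replace (_ + _ + _) with ((t * x j - w j * y j) ^ 2 / w j) by (field; lra).
    apply Rmult_le_pos; [apply pow2_ge_0 | left; apply Rinv_0_lt_compat; lra].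
Qed.

(** * The phase integral *)

Lemma Rabs_sin_le x : Rabs (sin x) <= Rabs x.
Proof.
  assert (Hpos : forall y, 0 <= y -> Rabs (sin y) <= y).
  { intros y Hy; apply Rabs_le; split.
    - destruct (Rle_lt_dec 1 y); [pose proof (SIN_bound y); lra|].
      pose proof PI2_1; pose proof (sin_ge_0 y Hy ltac:(lra)); lra.
    - destruct (Req_dec y 0) as [->|]; [rewrite sin_0; lra | left; apply sin_lt_x; lra]. }
  destruct (Rle_lt_dec 0 x).
  - rewrite (Rabs_pos_eq x) by lra; auto.
  - rewrite <- Rabs_Ropp, <- sin_neg, (Rabs_left x) by lra; apply Hpos; lra.
Qed.

Lemma Cmod_cexpi_sub1 t : Cmod (cexpi t - 1) = 2 * Rabs (sin (t / 2)).
Proof.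
  apply Rsqr_inj; [apply Cmod_ge_0 | pose proof (Rabs_pos (sin (t / 2))); lra|].
  rewrite !Rsqr_pow2, Cmod2_alt.
  replace ((2 * Rabs (sin (t / 2))) ^ 2) with (4 * sin (t / 2) ^ 2)
    by (rewrite <- (pow2_abs (sin (t / 2))); ring).
  unfold cexpi; simpl.
  set (u := t / 2); replace t with (2 * u) by (unfold u; field).
  rewrite cos_2a_sin, sin_2a; pose proof (sin2_cos2 u) as H; unfold Rsqr in H.
  transitivity (4 * sin u ^ 2 * (sin u * sin u + cos u * cos u)); [ring | rewrite H; ring].
Qed.

Lemma Cmod_cexpi_sub1_le t : Cmod (cexpi t - 1) <= Rmin (Rabs t) 2.
Proof.
  rewrite Cmod_cexpi_sub1.
  pose proof (Rabs_sin_le (t / 2)) as Hs; pose proof (SIN_bound (t / 2)).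
  rewrite Rabs_div, (Rabs_pos_eq 2) in Hs by lra.
  assert (Rabs (sin (t / 2)) <= 1) by (apply Rabs_le; lra).
  apply Rmin_glb; lra.
Qed.

Lemma Cmod_cexpi_sub1_mul_le a b :
  Cmod ((cexpi a - 1) * (cexpi b - 1)) <= 2 * Rmin (Rabs a) (Rabs b).
Proof.
  rewrite Cmod_mult.
  pose proof (Cmod_cexpi_sub1_le a) as Ha; pose proof (Cmod_cexpi_sub1_le b) as Hb.
  pose proof (Cmod_ge_0 (cexpi a - 1)); pose proof (Cmod_ge_0 (cexpi b - 1)).
  pose proof (Rmin_l (Rabs a) 2); pose proof (Rmin_r (Rabs a) 2).
  pose proof (Rmin_l (Rabs b) 2); pose proof (Rmin_r (Rabs b) 2).
  apply Rmin_case_strong; intros _; nra.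
Qed.

Lemma ex_RInt_Iphase tau k k1 k2 :
  ex_RInt (V := C_R_CompleteNormedModule)
    (fun s => (cexpi (-2 * s * IZR k2 ^ 2) - 1) * (cexpi (-2 * s * IZR k * IZR k1) - 1))%C
    0 tau.
Proof.
  apply (ex_RInt_fct_extend_pair (U := R_NormedModule) (V := R_NormedModule));
    apply (ex_RInt_continuous (V := R_CompleteNormedModule)); intros z _;
    apply (ex_derive_continuous (K := R_AbsRing) (V := R_NormedModule));
    unfold cexpi; simpl; auto_derive; auto.
Qed.

Lemma Cmod_Iphase_le tau k k1 k2 : 0 < tau ->
  Cmod (Iphase tau k k1 k2) <= 4 * tau ^ 2 * Rmin (IZR k2 ^ 2) (Rabs (IZR k * IZR k1)).
Proof.
  intros Htau; unfold Iphase; rewrite Cmod_norm.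
  replace (4 * tau ^ 2 * _) with ((tau - 0) * (4 * tau * Rmin (IZR k2 ^ 2) (Rabs (IZR k * IZR k1))))
    by ring.
  refine (norm_RInt_le_const (V := C_R_NormedModule) _ 0 tau _ _ (Rlt_le _ _ Htau) _
            (RInt_correct _ _ _ (ex_RInt_Iphase tau k k1 k2))).
  intros s Hs; rewrite <- Cmod_norm.
  eapply Rle_trans; [apply Cmod_cexpi_sub1_mul_le|].
  assert (E1 : Rabs (-2 * s * IZR k2 ^ 2) <= 2 * tau * IZR k2 ^ 2).
  { pose proof (pow2_ge_0 (IZR k2)).
    replace (-2 * s * IZR k2 ^ 2) with (- (2 * s * IZR k2 ^ 2)) by ring.
    rewrite Rabs_Ropp, Rabs_pos_eq; nra. }
  assert (E2 : Rabs (-2 * s * IZR k * IZR k1) <= 2 * tau * Rabs (IZR k * IZR k1)).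
  { pose proof (Rabs_pos (IZR k * IZR k1)).
    replace (-2 * s * IZR k * IZR k1) with (- (2 * s) * (IZR k * IZR k1)) by ring.
    rewrite Rabs_mult, Rabs_Ropp, (Rabs_pos_eq (2 * s)); nra. }
  pose proof (Rmin_l (Rabs (-2 * s * IZR k2 ^ 2)) (Rabs (-2 * s * IZR k * IZR k1))).
  pose proof (Rmin_r (Rabs (-2 * s * IZR k2 ^ 2)) (Rabs (-2 * s * IZR k * IZR k1))).
  set (m := Rmin (Rabs (-2 * s * IZR k2 ^ 2)) (Rabs (-2 * s * IZR k * IZR k1))) in *.
  apply (Rmin_case_strong _ _ (fun x => 2 * m <= 4 * tau * x)); intros _; lra.
Qed.

(** * Lattice sums of powers of <j> *)

Lemma Rpower_pos x y : 0 < Rpower x y.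
Proof. apply exp_pos. Qed.

Lemma Rpower_1_l a : Rpower 1 a = 1.
Proof. unfold Rpower; rewrite ln_1, Rmult_0_r; apply exp_0. Qed.

Lemma Rpower_le_1 x a : 1 <= x -> a <= 0 -> Rpower x a <= 1.
Proof. intros; rewrite <- (Rpower_O x) by lra; apply Rle_Rpower; auto. Qed.

Lemma Rpower_ge_1 x a : 1 <= x -> 0 <= a -> 1 <= Rpower x a.
Proof. intros; rewrite <- (Rpower_O x) by lra; apply Rle_Rpower; auto. Qed.

Lemma Rle_Rpower_l_nonpos x y a : 0 < x -> x <= y -> a <= 0 -> Rpower y a <= Rpower x a.
Proof.
  intros Hx Hxy Ha.
  rewrite <- (Ropp_involutive a), (Rpower_Ropp y), (Rpower_Ropp x).
  apply Rinv_le_contravar; [apply Rpower_pos | apply Rle_Rpower_l; lra].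
Qed.

Lemma Rpower_sqr x a : 0 < x -> Rpower (x ^ 2) a = Rpower x (2 * a).
Proof.
  intros Hx; rewrite <- (Rpower_pow 2 x Hx), Rpower_mult; f_equal; simpl; ring.
Qed.

Lemma Rpower_2 x : 0 < x -> Rpower x 2 = x ^ 2.
Proof. intros; rewrite <- Rpower_pow by auto; f_equal; simpl; ring. Qed.

Lemma Rpower_3 x : 0 < x -> Rpower x 3 = x ^ 3.
Proof. intros; rewrite <- Rpower_pow by auto; f_equal; simpl; ring. Qed.

Lemma Rpower_opp1 x : 0 < x -> Rpower x (Ropp 1) = / x.
Proof. intros; rewrite Rpower_Ropp, Rpower_1 by auto; reflexivity. Qed.

Lemma Rpower_opp_le_of_le_4mul x y s : 0 < x -> 0 < y -> 0 <= s -> x <= 4 * y ->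
  Rpower y (- s) <= Rpower 4 s * Rpower x (- s).
Proof.
  intros Hx Hy Hs Hxy.
  assert (H : Rpower (4 * y) (- s) <= Rpower x (- s)) by (apply Rle_Rpower_l_nonpos; lra).
  rewrite <- Rpower_mult_distr, Rpower_Ropp in H by lra.
  pose proof (Rpower_pos 4 s).
  apply (Rmult_le_compat_l (Rpower 4 s)) in H; [|lra].
  rewrite <- Rmult_assoc, Rinv_r, Rmult_1_l in H by lra; exact H.
Qed.

Lemma Rpower_scale_le x a b S K : 1 <= x -> a + b <= 0 -> 0 <= K ->
  S <= K * Rpower x b -> Rpower x a * S <= K.
Proof.
  intros Hx Hab HK HS.
  pose proof (Rpower_pos x a); pose proof (Rpower_le_1 x (a + b) Hx Hab).
  rewrite Rpower_plus in *; nra.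
Qed.

Lemma Rpower_pred_le_diff b x : b <> 0 -> b <= 1 -> 1 < x ->
  Rpower x (b - 1) <= (Rpower x b - Rpower (x - 1) b) / b.
Proof.
  intros Hb0 Hb1 Hx.
  destruct (MVT_cor2 (fun y => Rpower y b) (fun y => b * Rpower y (b - 1)) (x - 1) x)
    as [c [Hc Hcx]]; [lra | intros c Hc; apply derivable_pt_lim_power; lra|].
  rewrite Hc; replace (b * Rpower c (b - 1) * (x - (x - 1)) / b) with (Rpower c (b - 1))
    by (field; auto).
  apply Rle_Rpower_l_nonpos; lra.
Qed.

Lemma isum_Rpower_le b c n : b <> 0 -> b <= 1 -> (1 <= c)%Z ->
  isum (fun j => Rpower (IZR j) (b - 1)) (c + 1) n
    <= (Rpower (IZR c + INR n) b - Rpower (IZR c) b) / b.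
Proof.
  intros Hb0 Hb1 Hc; apply IZR_le in Hc.
  induction n as [|n IH]; simpl isum.
  - rewrite Rplus_0_r; unfold Rdiv; lra.
  - pose proof (pos_INR n).
    pose proof (Rpower_pred_le_diff b (IZR c + INR n + 1) Hb0 Hb1 ltac:(lra)) as Hstep.
    replace (IZR (c + 1 + Z.of_nat n)) with (IZR c + INR n + 1)
      by (rewrite !plus_IZR, <- INR_IZR_INZ; ring).
    rewrite S_INR, <- Rplus_assoc.
    replace (IZR c + INR n + 1 - 1) with (IZR c + INR n) in Hstep by ring.
    apply Rle_trans with (1 := Rplus_le_compat _ _ _ _ IH Hstep), Req_le; field; auto.
Qed.

(* [jb j] is the squared Japanese bracket <j>^2 = 1 + j^2, so [sob_w s j = Rpower (jb j) s]. *)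
Definition jb (j : Z) : R := 1 + IZR j ^ 2.

Lemma jb_ge_1 j : 1 <= jb j.
Proof. unfold jb; pose proof (pow2_ge_0 (IZR j)); lra. Qed.

Lemma jb_pos j : 0 < jb j.
Proof. pose proof (jb_ge_1 j); lra. Qed.

Lemma jb_abs j : jb j = 1 + Rabs (IZR j) ^ 2.
Proof. unfold jb; rewrite pow2_abs; reflexivity. Qed.

Lemma jb_opp j : jb (- j) = jb j.
Proof. rewrite !jb_abs, opp_IZR, Rabs_Ropp; reflexivity. Qed.

Lemma jb_Zabs j : jb j = jb (Z.of_nat (Z.abs_nat j)).
Proof. rewrite !jb_abs, !Rabs_Zabs; do 3 f_equal; lia. Qed.

Lemma jb_Zabs_pow j : jb j = 1 + IZR (Z.abs j) ^ 2.
Proof. rewrite <- Rabs_Zabs; apply jb_abs. Qed.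

Lemma Rpower_jb_nonneg e j : 0 <= Rpower (jb j) e.
Proof. left; apply Rpower_pos. Qed.

Lemma Rpower_jb_opp e j : Rpower (jb (- j)) e = Rpower (jb j) e.
Proof. rewrite jb_opp; reflexivity. Qed.

Lemma sob_w_pos s j : 0 < sob_w s j.
Proof. apply Rpower_pos. Qed.

Lemma Rpower_jb_le_IZR j e : (1 <= j)%Z -> e <= 0 -> Rpower (jb j) e <= Rpower (IZR j) (2 * e).
Proof.
  intros Hj He; apply IZR_le in Hj.
  rewrite <- Rpower_sqr by lra; apply Rle_Rpower_l_nonpos; [nra | unfold jb; lra | lra].
Qed.

Lemma Rpower_IZR_le_jb j a : (1 <= j)%Z ->
  Rpower (IZR j) (2 * a) <= Rpower 2 (Rabs a) * Rpower (jb j) a.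
Proof.
  intros Hj; apply IZR_le in Hj.
  rewrite <- Rpower_sqr by lra.
  destruct (Rle_lt_dec 0 a) as [Ha|Ha].
  - rewrite Rabs_pos_eq by lra.
    pose proof (Rpower_ge_1 2 a ltac:(lra) Ha); pose proof (Rpower_pos (jb j) a).
    assert (Rpower (IZR j ^ 2) a <= Rpower (jb j) a) by (apply Rle_Rpower_l; unfold jb; nra).
    nra.
  - assert (H : Rpower 2 a * Rpower (IZR j ^ 2) a <= Rpower (jb j) a).
    { rewrite Rpower_mult_distr by nra.
      apply Rle_Rpower_l_nonpos; [apply jb_pos | unfold jb; nra | lra]. }
    pose proof (Rpower_pos 2 a).
    rewrite Rabs_left, Rpower_Ropp by lra.
    apply (Rmult_le_reg_l (Rpower 2 a)); [lra|].
    rewrite <- Rmult_assoc, Rinv_r, Rmult_1_l by lra; exact H.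
Qed.

Lemma isum_jb_power_crude e c :
  isum (fun j => Rpower (jb j) e) 0 (S c) <= 2 * Rpower (jb (Z.of_nat c)) (Rmax e 0 + / 2).
Proof.
  set (X := jb (Z.of_nat c)).
  apply Rle_trans with (isum (fun _ => Rpower X (Rmax e 0)) 0 (S c)).
  - apply isum_le; intros i Hi; destruct (Rle_lt_dec 0 e).
    + rewrite Rmax_left by lra; apply Rle_Rpower_l; [lra | split; [apply jb_pos|]].
      unfold X, jb; rewrite <- !INR_IZR_INZ, Z.add_0_l, <- INR_IZR_INZ.
      pose proof (pos_INR i); assert (INR i <= INR c) by (apply le_INR; lia); nra.
    + rewrite Rmax_right, Rpower_O by (try apply jb_pos; lra).
      apply Rpower_le_1; [apply jb_ge_1 | lra].
  - rewrite isum_const, Rpower_plus, Rpower_sqrt by apply jb_pos.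
    assert (INR (S c) <= 2 * sqrt X).
    { pose proof (sqrt_pos X); pose proof (sqrt_sqrt X (Rlt_le _ _ (jb_pos _))).
      apply Rsqr_incr_0_var; [|lra]; unfold Rsqr, X, jb in *.
      rewrite <- INR_IZR_INZ in *; rewrite S_INR; nra. }
    pose proof (Rpower_pos X (Rmax e 0)); nra.
Qed.

Lemma isum_jb_power_tail e c n : e < - / 2 -> (1 <= c)%Z ->
  isum (fun j => Rpower (jb j) e) (c + 1) n
    <= Rpower 2 (Rabs (e + / 2)) / (- (2 * e + 1)) * Rpower (jb c) (e + / 2).
Proof.
  intros He Hc; set (b := 2 * e + 1).
  apply Rle_trans with (isum (fun j => Rpower (IZR j) (b - 1)) (c + 1) n).
  { apply isum_le; intros i _; replace (b - 1) with (2 * e) by (unfold b; ring).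
    apply Rpower_jb_le_IZR; lia || lra. }
  eapply Rle_trans; [apply isum_Rpower_le; unfold b; auto; lra|].
  pose proof (Rpower_pos (IZR c + INR n) b); pose proof (Rpower_IZR_le_jb c (e + / 2) Hc).
  replace (2 * (e + / 2)) with b in * by (unfold b; field).
  assert (Hb : 0 < / - b) by (apply Rinv_0_lt_compat; unfold b; lra).
  replace (_ / b) with ((Rpower (IZR c) b - Rpower (IZR c + INR n) b) * / - b)
    by (field; unfold b; lra).
  unfold Rdiv; nra.
Qed.

Lemma isum_jb_power_telescope e m : e < 0 -> e <> - / 2 ->
  isum (fun j => Rpower (jb j) e) 0 (2 + m)
    <= 2 + (Rpower (1 + INR m) (2 * e + 1) - 1) / (2 * e + 1).
Proof.
  intros He He2; rewrite isum_app; apply Rplus_le_compat.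
  - apply Rle_trans with (isum (fun _ => 1) 0 2).
    + apply isum_le; intros; apply Rpower_le_1; [apply jb_ge_1 | lra].
    + rewrite isum_const; simpl; lra.
  - apply Rle_trans with (isum (fun j => Rpower (IZR j) (2 * e + 1 - 1)) (1 + 1) m).
    + apply isum_le; intros i _; replace (2 * e + 1 - 1) with (2 * e) by ring.
      apply Rpower_jb_le_IZR; lia || lra.
    + replace (Rpower (1 + INR m) (2 * e + 1) - 1)
        with (Rpower (1 + INR m) (2 * e + 1) - Rpower 1 (2 * e + 1)) by (rewrite Rpower_1_l; ring).
      apply isum_Rpower_le; lra || lia.
Qed.

Lemma isum_jb_power_lt e c : e < - / 2 ->
  isum (fun j => Rpower (jb j) e) 0 (S c) <= 2 + 1 / - (2 * e + 1).
Proof.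
  intros He; set (b := 2 * e + 1).
  eapply Rle_trans.
  { apply (isum_subinterval _ (Rpower_jb_nonneg e) 0 (S c) 0 (2 + c)); lia. }
  eapply Rle_trans; [apply isum_jb_power_telescope; lra|]; fold b.
  pose proof (Rpower_pos (1 + INR c) b).
  assert (0 < / - b) by (apply Rinv_0_lt_compat; unfold b; lra).
  replace ((Rpower (1 + INR c) b - 1) / b) with ((1 - Rpower (1 + INR c) b) * / - b)
    by (field; unfold b; lra).
  unfold Rdiv; nra.
Qed.

Lemma isum_jb_power_gt e c : - / 2 < e < 0 ->
  isum (fun j => Rpower (jb j) e) 0 (S c)
    <= (2 + Rpower 2 (Rabs (e + / 2)) / (2 * e + 1)) * Rpower (jb (Z.of_nat c)) (e + / 2).
Proof.
  intros He; set (b := 2 * e + 1).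
  assert (Hb : 0 < / b) by (apply Rinv_0_lt_compat; unfold b; lra).
  pose proof (Rpower_pos 2 (Rabs (e + / 2))).
  destruct c as [|c].
  - replace (jb (Z.of_nat 0)) with 1 by (unfold jb; simpl; ring).
    simpl isum; replace (jb 0) with 1 by (unfold jb; simpl; ring).
    rewrite !Rpower_1_l; unfold Rdiv; nra.
  - pose proof (Rpower_IZR_le_jb (Z.of_nat (S c)) (e + / 2) ltac:(lia)) as HX.
    replace (IZR (Z.of_nat (S c))) with (1 + INR c) in HX
      by (rewrite <- INR_IZR_INZ, S_INR; ring).
    replace (2 * (e + / 2)) with b in HX by (unfold b; field).
    pose proof (Rpower_ge_1 (jb (Z.of_nat (S c))) (e + / 2) (jb_ge_1 _) ltac:(lra)).
    eapply Rle_trans; [apply (isum_jb_power_telescope e c); lra|]; fold b.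
    unfold Rdiv; nra.
Qed.

(* At [e = -1/2] the sum grows logarithmically, which is why [s = 5/2] is excluded below. *)
Lemma isum_jb_power e : e <> - / 2 -> exists D, 0 <= D /\ forall c : nat,
  isum (fun j => Rpower (jb j) e) 0 (S c) <= D * Rpower (jb (Z.of_nat c)) (Rmax (e + / 2) 0).
Proof.
  intros He.
  destruct (Rle_lt_dec 0 e) as [He0|He0]; [|destruct (Rlt_le_dec e (- / 2)) as [Hlt|Hge]].
  - exists 2; split; [lra|]; intros c; rewrite Rmax_left by lra.
    replace (e + / 2) with (Rmax e 0 + / 2) by (rewrite Rmax_left; lra).
    apply isum_jb_power_crude.
  - assert (0 < / - (2 * e + 1)) by (apply Rinv_0_lt_compat; lra).
    exists (2 + 1 / - (2 * e + 1)); split; [unfold Rdiv; nra|]; intros c.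
    rewrite Rmax_right, Rpower_O, Rmult_1_r by (try apply jb_pos; lra).
    apply isum_jb_power_lt, Hlt.
  - assert (0 < / (2 * e + 1)) by (apply Rinv_0_lt_compat; lra).
    pose proof (Rpower_pos 2 (Rabs (e + / 2))).
    exists (2 + Rpower 2 (Rabs (e + / 2)) / (2 * e + 1)); split; [unfold Rdiv; nra|]; intros c.
    rewrite Rmax_left by lra; apply isum_jb_power_gt; lra.
Qed.

(** * The kernel *)

Definition multiplier (k k1 : Z) : R :=
  IZR k1 ^ 2 / IZR k ^ 2 * Rmin (IZR (k - k1) ^ 2) (Rabs (IZR k * IZR k1)).

Lemma multiplier_Zabs k k1 : multiplier k k1 =
  IZR (Z.abs k1) ^ 2 / IZR (Z.abs k) ^ 2
    * Rmin (IZR (Z.abs (k - k1)) ^ 2) (IZR (Z.abs k) * IZR (Z.abs k1)).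
Proof. unfold multiplier; rewrite <- !Rabs_Zabs, !pow2_abs, Rabs_mult; reflexivity. Qed.

Lemma jb_le_4mul j j' : (Z.abs j <= 2 * Z.abs j')%Z -> jb j <= 4 * jb j'.
Proof.
  intros H; apply IZR_le in H; rewrite mult_IZR in H.
  rewrite !jb_Zabs_pow; pose proof (IZR_le 0 _ (Z.abs_nonneg j)); nra.
Qed.

Lemma multiplier_sqr_le_jb2 k k1 : k <> 0%Z -> (Z.abs k1 <= 2 * Z.abs k)%Z ->
  multiplier k k1 ^ 2 <= 16 * jb (k - k1) ^ 2.
Proof.
  intros Hk Hac; rewrite multiplier_Zabs, jb_Zabs_pow.
  assert (Hc : 1 <= IZR (Z.abs k)) by (apply IZR_le; lia).
  apply IZR_le in Hac; rewrite mult_IZR in Hac.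
  pose proof (IZR_le 0 _ (Z.abs_nonneg k1)); pose proof (IZR_le 0 _ (Z.abs_nonneg (k - k1))).
  set (a := IZR (Z.abs k1)) in *; set (b := IZR (Z.abs (k - k1))) in *;
    set (c := IZR (Z.abs k)) in *.
  assert (Hq : 0 <= a ^ 2 / c ^ 2 <= 4).
  { split; [apply Rmult_le_pos; [nra | left; apply Rinv_0_lt_compat; nra]|].
    apply (Rmult_le_reg_r (c ^ 2)); [nra|].
    unfold Rdiv; rewrite Rmult_assoc, Rinv_l by nra; nra. }
  pose proof (Rmin_l (b ^ 2) (c * a)).
  assert (0 <= Rmin (b ^ 2) (c * a)) by (apply Rmin_glb; nra).
  assert (0 <= a ^ 2 / c ^ 2 * Rmin (b ^ 2) (c * a) <= 4 * (1 + b ^ 2)) by nra.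
  nra.
Qed.

Lemma multiplier_sqr_le_jb3 k k1 : k <> 0%Z ->
  multiplier k k1 ^ 2 <= 2 * jb k1 ^ 3 / jb k.
Proof.
  intros Hk; rewrite multiplier_Zabs, !jb_Zabs_pow.
  assert (Hc : 1 <= IZR (Z.abs k)) by (apply IZR_le; lia).
  pose proof (IZR_le 0 _ (Z.abs_nonneg k1)); pose proof (IZR_le 0 _ (Z.abs_nonneg (k - k1))).
  set (a := IZR (Z.abs k1)) in *; set (b := IZR (Z.abs (k - k1))) in *;
    set (c := IZR (Z.abs k)) in *.
  assert (Hm : 0 <= a ^ 2 / c ^ 2 * Rmin (b ^ 2) (c * a) <= a ^ 3 / c).
  { assert (0 <= a ^ 2 / c ^ 2) by (apply Rmult_le_pos; [nra | left; apply Rinv_0_lt_compat; nra]).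
    pose proof (Rmin_r (b ^ 2) (c * a)).
    assert (0 <= Rmin (b ^ 2) (c * a)) by (apply Rmin_glb; nra).
    replace (a ^ 3 / c) with (a ^ 2 / c ^ 2 * (c * a)) by (field; lra).
    split; [apply Rmult_le_pos | apply Rmult_le_compat_l]; lra. }
  apply Rle_trans with ((a ^ 3 / c) ^ 2); [apply pow_incr; lra|].
  replace ((a ^ 3 / c) ^ 2) with (a ^ 6 / c ^ 2) by (field; lra).
  apply Rmult_le_reg_r with (r := c ^ 2 * (1 + c ^ 2)); [nra|].
  replace (a ^ 6 / c ^ 2 * (c ^ 2 * (1 + c ^ 2))) with (a ^ 6 * (1 + c ^ 2)) by (field; lra).
  replace (2 * (1 + a ^ 2) ^ 3 / (1 + c ^ 2) * (c ^ 2 * (1 + c ^ 2)))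
    with (2 * (1 + a ^ 2) ^ 3 * c ^ 2) by (field; nra).
  assert (a ^ 6 <= (1 + a ^ 2) ^ 3) by (pose proof (pow2_ge_0 a); nra).
  apply Rle_trans with (a ^ 6 * (2 * c ^ 2)); [apply Rmult_le_compat_l; nra|].
  pose proof (pow2_ge_0 c); nra.
Qed.

Definition kernel (r s : R) (k k1 : Z) : R :=
  Rpower (jb k) r * multiplier k k1 ^ 2 * Rpower (jb k1) (- s) * Rpower (jb (k - k1)) (- s).

Lemma kernel_nonneg r s k k1 : 0 <= kernel r s k k1.
Proof.
  unfold kernel; pose proof (pow2_ge_0 (multiplier k k1)).
  pose proof (Rpower_pos (jb k) r); pose proof (Rpower_pos (jb k1) (- s));
    pose proof (Rpower_pos (jb (k - k1)) (- s)).
  apply Rmult_le_pos; [apply Rmult_le_pos; [apply Rmult_le_pos|]|]; lra.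
Qed.

Section KernelRegions.

Variables (r s : R) (k k1 : Z).
Hypotheses (k_neq0 : k <> 0%Z) (s_ge0 : 0 <= s).

Let A := Rpower (jb k) r.
Let W := Rpower (jb k) (- s).
Let W1 := Rpower (jb k1) (- s).
Let W2 := Rpower (jb (k - k1)) (- s).
Let F := Rpower 4 s.

Let weights_pos : 0 < A /\ 0 < W /\ 0 < W1 /\ 0 < W2 /\ 0 < F.
Proof. repeat split; apply Rpower_pos. Qed.

Lemma kernel_le_region1 :
  (Z.abs (k - k1) <= Z.abs k)%Z -> (Z.abs (k - k1) <= Z.abs k1)%Z ->
  kernel r s k k1 <= 16 * Rpower 4 s * Rpower (jb k) (r - s) * Rpower (jb (k - k1)) (2 - s).
Proof.
  intros H1 H2.
  pose proof (multiplier_sqr_le_jb2 k k1 k_neq0 ltac:(lia)) as Hm.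
  pose proof (Rpower_opp_le_of_le_4mul (jb k) (jb k1) s (jb_pos _) (jb_pos _) s_ge0
                (jb_le_4mul k k1 ltac:(lia))) as Hw.
  unfold kernel, Rminus; rewrite !Rpower_plus, Rpower_2 by apply jb_pos.
  fold A W W1 W2 F; pose proof weights_pos.
  replace (A * _ * W1 * W2) with ((A * W2) * (multiplier k k1 ^ 2 * W1)) by ring.
  replace (16 * F * _ * _) with ((A * W2) * ((16 * jb (k - k1) ^ 2) * (F * W))) by ring.
  apply Rmult_le_compat_l; [nra|].
  apply Rmult_le_compat; [apply pow2_ge_0 | lra | exact Hm | exact Hw].
Qed.

Lemma kernel_le_region2 :
  (Z.abs k1 <= Z.abs k)%Z -> (Z.abs k <= 2 * Z.abs (k - k1))%Z ->
  kernel r s k k1 <= 2 * Rpower 4 s * Rpower (jb k) (r - s - 1) * Rpower (jb k1) (3 - s).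
Proof.
  intros H1 H2.
  pose proof (multiplier_sqr_le_jb3 k k1 k_neq0) as Hm.
  pose proof (Rpower_opp_le_of_le_4mul (jb k) (jb (k - k1)) s (jb_pos _) (jb_pos _) s_ge0
                (jb_le_4mul k (k - k1) H2)) as Hw.
  unfold kernel, Rminus; rewrite !Rpower_plus, Rpower_opp1, Rpower_3 by apply jb_pos.
  fold A W W1 W2 F; pose proof weights_pos.
  replace (A * _ * W1 * W2) with ((A * W1) * (multiplier k k1 ^ 2 * W2)) by ring.
  replace (2 * F * _ * _) with ((A * W1) * ((2 * jb k1 ^ 3 / jb k) * (F * W)))
    by (unfold Rdiv; ring).
  apply Rmult_le_compat_l; [nra|].
  apply Rmult_le_compat; [apply pow2_ge_0 | lra | exact Hm | exact Hw].
Qed.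

Lemma kernel_le_region3 :
  (Z.abs k1 <= 2 * Z.abs (k - k1))%Z ->
  kernel r s k k1 <= 2 * Rpower 4 s * Rpower (jb k) (r - 1) * Rpower (jb k1) (3 - 2 * s).
Proof.
  intros H.
  pose proof (multiplier_sqr_le_jb3 k k1 k_neq0) as Hm.
  pose proof (Rpower_opp_le_of_le_4mul (jb k1) (jb (k - k1)) s (jb_pos _) (jb_pos _) s_ge0
                (jb_le_4mul k1 (k - k1) H)) as Hw.
  replace (3 - 2 * s) with (3 + - s + - s) by ring.
  unfold kernel, Rminus; rewrite !Rpower_plus, Rpower_opp1, Rpower_3 by apply jb_pos.
  fold A W W1 W2 F; pose proof weights_pos.
  replace (A * _ * W1 * W2) with ((A * W1) * (multiplier k k1 ^ 2 * W2)) by ring.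
  replace (2 * F * _ * _) with ((A * W1) * ((2 * jb k1 ^ 3 / jb k) * (F * W1)))
    by (unfold Rdiv; ring).
  apply Rmult_le_compat_l; [nra|].
  apply Rmult_le_compat; [apply pow2_ge_0 | lra | exact Hm | exact Hw].
Qed.

End KernelRegions.

Definition low_freq (k : Z) (h : Z -> R) (j : Z) : R :=
  if (Z.abs j <=? Z.abs k)%Z then h j else 0.
Definition high_freq (k : Z) (h : Z -> R) (j : Z) : R :=
  if (Z.abs j <=? Z.abs k)%Z then 0 else h j.

Section FrequencyCuts.

Variables (k : Z) (h : Z -> R).
Hypotheses (h_nonneg : forall j, 0 <= h j) (h_even : forall j, h (- j)%Z = h j).

Lemma low_freq_nonneg j : 0 <= low_freq k h j.
Proof. unfold low_freq; destruct (_ <=? _)%Z; [apply h_nonneg | lra]. Qed.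

Lemma high_freq_nonneg j : 0 <= high_freq k h j.
Proof. unfold high_freq; destruct (_ <=? _)%Z; [lra | apply h_nonneg]. Qed.

Lemma low_freq_even j : low_freq k h (- j) = low_freq k h j.
Proof. unfold low_freq; rewrite Z.abs_opp, h_even; reflexivity. Qed.

Lemma high_freq_even j : high_freq k h (- j) = high_freq k h j.
Proof. unfold high_freq; rewrite Z.abs_opp, h_even; reflexivity. Qed.

Lemma isum_low_freq_le lo n :
  isum (low_freq k h) lo n <= 2 * isum h 0 (S (Z.abs_nat k)).
Proof.
  set (c := Z.abs_nat k).
  eapply Rle_trans; [apply (isum_le_of_support _ low_freq_nonneg (- Z.of_nat c) (2 * c + 1))|].
  { intros x Hx; unfold low_freq; destruct (Z.leb_spec (Z.abs x) (Z.abs k)); [lia | auto]. }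
  eapply Rle_trans; [apply (isum_symmetric_le _ low_freq_nonneg low_freq_even)|].
  apply Rmult_le_compat_l; [lra|]; apply isum_le; intros i Hi.
  unfold low_freq; destruct (Z.leb_spec (Z.abs (0 + Z.of_nat i)) (Z.abs k)); [lra | lia].
Qed.

Lemma isum_high_freq_le B :
  (forall M, isum h (Z.of_nat (Z.abs_nat k) + 1) M <= B) ->
  forall lo n, isum (high_freq k h) lo n <= 2 * B.
Proof.
  intros HB; apply (isum_le_of_symmetric _ high_freq_nonneg); intros M.
  eapply Rle_trans; [apply (isum_symmetric_le _ high_freq_nonneg high_freq_even)|].
  apply Rmult_le_compat_l; [lra|].
  set (c := Z.abs_nat k).
  eapply Rle_trans; [apply (isum_subinterval _ high_freq_nonneg 0 (S M) 0 (S c + M)); lia|].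
  rewrite isum_app.
  assert (isum (high_freq k h) 0 (S c) <= 0).
  { apply isum_zero_le; intros i Hi; unfold high_freq.
    destruct (Z.leb_spec (Z.abs (0 + Z.of_nat i)) (Z.abs k)); [lra | lia]. }
  assert (isum (high_freq k h) (0 + Z.of_nat (S c)) M <= B).
  { replace (0 + Z.of_nat (S c))%Z with (Z.of_nat c + 1)%Z by lia.
    eapply Rle_trans; [|apply (HB M)].
    apply isum_le; intros i _; unfold high_freq; destruct (_ <=? _)%Z; [apply h_nonneg | lra]. }
  lra.
Qed.

End FrequencyCuts.

Lemma kernel_le_freq_cuts r s k k1 : k <> 0%Z -> 0 <= s ->
  kernel r s k k1 <=
    16 * Rpower 4 s * Rpower (jb k) (r - s) * low_freq k (fun j => Rpower (jb j) (2 - s)) (k - k1)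
  + 2 * Rpower 4 s * Rpower (jb k) (r - s - 1) * low_freq k (fun j => Rpower (jb j) (3 - s)) k1
  + 2 * Rpower 4 s * Rpower (jb k) (r - 1) * high_freq k (fun j => Rpower (jb j) (3 - 2 * s)) k1.
Proof.
  intros Hk Hs.
  assert (Hc : forall c a, 0 < c -> 0 <= c * Rpower 4 s * Rpower (jb k) a)
    by (intros; pose proof (Rpower_pos 4 s); pose proof (Rpower_pos (jb k) a);
        apply Rmult_le_pos; [apply Rmult_le_pos|]; lra).
  pose proof (Rmult_le_pos _ _ (Hc 16 (r - s) ltac:(lra))
                (low_freq_nonneg k _ (Rpower_jb_nonneg (2 - s)) (k - k1))).
  pose proof (Rmult_le_pos _ _ (Hc 2 (r - s - 1) ltac:(lra))
                (low_freq_nonneg k _ (Rpower_jb_nonneg (3 - s)) k1)).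
  pose proof (Rmult_le_pos _ _ (Hc 2 (r - 1) ltac:(lra))
                (high_freq_nonneg k _ (Rpower_jb_nonneg (3 - 2 * s)) k1)).
  unfold low_freq, high_freq in *.
  destruct (Z.leb_spec (Z.abs (k - k1)) (Z.abs k)), (Z.leb_spec (Z.abs k1) (Z.abs k));
    [destruct (Z.le_gt_cases (Z.abs (k - k1)) (Z.abs k1))| | |].
  - pose proof (kernel_le_region1 r s k k1 Hk Hs ltac:(lia) ltac:(lia)); lra.
  - pose proof (kernel_le_region2 r s k k1 Hk Hs ltac:(lia) ltac:(lia)); lra.
  - pose proof (kernel_le_region1 r s k k1 Hk Hs ltac:(lia) ltac:(lia)); lra.
  - pose proof (kernel_le_region2 r s k k1 Hk Hs ltac:(lia) ltac:(lia)); lra.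
  - pose proof (kernel_le_region3 r s k k1 Hk Hs ltac:(lia)); lra.
Qed.

Lemma isum_kernel_bounded r s : r <= s -> r + 5 / 2 <= 2 * s -> 7 / 4 < s -> s <> 5 / 2 ->
  exists C, forall k, k <> 0%Z -> forall lo n, isum (kernel r s k) lo n <= C.
Proof.
  intros Hrs Hr52 Hs74 Hs52.
  destruct (isum_jb_power (2 - s) ltac:(lra)) as [D [HD HsumD]].
  set (T := Rpower 2 (Rabs (3 - 2 * s + / 2)) / (- (2 * (3 - 2 * s) + 1))).
  assert (HT : 0 <= T).
  { unfold T, Rdiv; left.
    apply Rmult_lt_0_compat; [apply Rpower_pos | apply Rinv_0_lt_compat; lra]. }
  set (F := Rpower 4 s); pose proof (Rpower_pos 4 s : 0 < F).
  exists (16 * F * (2 * D) + 2 * F * 4 + 2 * F * (2 * T)); intros k Hk lo n.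
  set (X := jb (Z.of_nat (Z.abs_nat k))).
  assert (HX : jb k = X) by apply jb_Zabs; pose proof (jb_ge_1 (Z.of_nat (Z.abs_nat k)) : 1 <= X).
  eapply Rle_trans.
  { apply isum_le; intros i _; generalize (lo + Z.of_nat i)%Z; intros k1.
    apply kernel_le_freq_cuts; [exact Hk | lra]. }
  rewrite !isum_plus, !isum_scal, HX.
  assert (H1 : Rpower X (r - s)
                 * isum (fun x => low_freq k (fun j => Rpower (jb j) (2 - s)) (k - x)) lo n
               <= 2 * D).
  { apply Rpower_scale_le with (b := Rmax (2 - s + / 2) 0); [lra | | lra |].
    { pose proof (Rmax_lub (2 - s + / 2) 0 (s - r) ltac:(lra) ltac:(lra)); lra. }
    rewrite isum_reflect, Rmult_assoc.
    eapply Rle_trans; [apply isum_low_freq_le; [apply Rpower_jb_nonneg | apply Rpower_jb_opp]|].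
    apply Rmult_le_compat_l; [lra | apply HsumD]. }
  assert (H2 : Rpower X (r - s - 1)
                 * isum (low_freq k (fun j => Rpower (jb j) (3 - s))) lo n <= 4).
  { apply Rpower_scale_le with (b := Rmax (3 - s) 0 + / 2); [lra | | lra |].
    { pose proof (Rmax_lub (3 - s) 0 (s - r + / 2) ltac:(lra) ltac:(lra)); lra. }
    eapply Rle_trans; [apply isum_low_freq_le; [apply Rpower_jb_nonneg | apply Rpower_jb_opp]|].
    pose proof (isum_jb_power_crude (3 - s) (Z.abs_nat k)) as Hcrude; fold X in Hcrude; lra. }
  assert (H3 : Rpower X (r - 1)
                 * isum (high_freq k (fun j => Rpower (jb j) (3 - 2 * s))) lo n <= 2 * T).
  { apply Rpower_scale_le with (b := 3 - 2 * s + / 2); [lra | lra | lra|].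
    rewrite Rmult_assoc; apply isum_high_freq_le; [apply Rpower_jb_nonneg | apply Rpower_jb_opp|].
    intros M; apply isum_jb_power_tail; lra || lia. }
  fold F; nra.
Qed.

(** * The coefficients of P_1^tau(f) *)

Definition conj_weight (fh : Z -> C) (s : R) (j : Z) : R :=
  sob_w s j * Cmod (conj_coef fh j) ^ 2.

Definition conv_weight (fh : Z -> C) (s : R) (k : Z) : R :=
  zsum (fun k1 => conj_weight fh s k1 * conj_weight fh s (k - k1)).

Lemma conj_weight_nonneg fh s j : 0 <= conj_weight fh s j.
Proof. apply Rmult_le_pos; [apply Rlt_le, sob_w_pos | apply pow2_ge_0]. Qed.

Lemma conv_term_nonneg fh s k k1 : 0 <= conj_weight fh s k1 * conj_weight fh s (k - k1).
Proof. apply Rmult_le_pos; apply conj_weight_nonneg. Qed.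

Section Weights.

Variables (fh : Z -> C) (s : R).
Hypothesis f_in_H : inH s fh.

Local Notation W := (conj_weight fh s).

Lemma isum_conj_weight_le lo n : isum W lo n <= Hnorm2 s fh.
Proof.
  set (A := fun j => sob_w s j * Cmod (fh j) ^ 2).
  assert (HA : forall j, 0 <= A j)
    by (intros j; apply Rmult_le_pos; [apply Rlt_le, sob_w_pos | apply pow2_ge_0]).
  revert lo n; apply (isum_le_of_symmetric _ (conj_weight_nonneg fh s)); intros M.
  rewrite (isum_ext _ (fun j => A (0 - j)%Z)).
  - rewrite isum_reflect; apply isum_le_zsum; auto.
  - intros j; unfold conj_weight, conj_coef, A, sob_w; rewrite Cmod_conj.
    replace (- j)%Z with (0 - j)%Z by lia; rewrite minus_IZR; do 3 f_equal; ring.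
Qed.

Lemma Hnorm2_nonneg : 0 <= Hnorm2 s fh.
Proof. pose proof (isum_conj_weight_le 0 0); simpl in *; lra. Qed.

Lemma isum_conv_le k lo n :
  isum (fun k1 => W k1 * W (k - k1)%Z) lo n <= Hnorm2 s fh * Hnorm2 s fh.
Proof.
  apply Rle_trans with (isum (fun k1 => Hnorm2 s fh * W k1) lo n).
  - apply isum_le; intros i _; rewrite Rmult_comm; apply Rmult_le_compat_r;
      [apply conj_weight_nonneg|].
    pose proof (isum_conj_weight_le (k - (lo + Z.of_nat i)) 1) as H; simpl in H.
    rewrite Z.add_0_r in H; lra.
  - rewrite isum_scal; apply Rmult_le_compat_l; [apply Hnorm2_nonneg | apply isum_conj_weight_le].
Qed.

Lemma conv_summable k : zsummable (fun k1 => W k1 * W (k - k1)%Z).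
Proof.
  exact (proj1 (zsum_le _ (conv_term_nonneg fh s k) _ (isum_conv_le k))).
Qed.

Lemma isum_conv_weight_le lo n : isum (conv_weight fh s) lo n <= Hnorm2 s fh ^ 2.
Proof.
  unfold conv_weight.
  destruct (zsum_isum (fun k k1 => W k1 * W (k - k1)%Z) lo n conv_summable) as [_ <-].
  refine (proj2 (zsum_le _ _ _ _)).
  - intros x; apply isum_nonneg; intros; apply conv_term_nonneg.
  - intros lo' n'.
    apply Rle_trans with (isum (fun x => Hnorm2 s fh * W x) lo' n').
    + apply isum_le; intros i _.
      rewrite isum_scal, isum_shift, Rmult_comm.
      apply Rmult_le_compat_r; [apply conj_weight_nonneg | apply isum_conj_weight_le].
    + rewrite isum_scal; replace (Hnorm2 s fh ^ 2) with (Hnorm2 s fh * Hnorm2 s fh) by ring.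
      apply Rmult_le_compat_l; [apply Hnorm2_nonneg | apply isum_conj_weight_le].
Qed.

End Weights.

Definition P1term (tau : R) (fh : Z -> C) (k k1 : Z) : C :=
  (RtoC (IZR k1 ^ 2 / IZR k ^ 2) * Iphase tau k k1 (k - k1)
     * conj_coef fh k1 * conj_coef fh (k - k1))%C.

Lemma P1coef_neq0 tau fh k : k <> 0%Z -> P1coef tau fh k = zsumC (P1term tau fh k).
Proof. intros Hk; unfold P1coef; rewrite (proj2 (Z.eqb_neq k 0) Hk); reflexivity. Qed.

Lemma Cmod_P1term_le tau fh k k1 : 0 < tau ->
  Cmod (P1term tau fh k k1)
    <= 4 * tau ^ 2 * (multiplier k k1 * Cmod (conj_coef fh k1) * Cmod (conj_coef fh (k - k1))).
Proof.
  intros Htau; unfold P1term, multiplier; rewrite !Cmod_mult, Cmod_R.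
  pose proof (Cmod_Iphase_le tau k k1 (k - k1) Htau).
  pose proof (Cmod_ge_0 (conj_coef fh k1)); pose proof (Cmod_ge_0 (conj_coef fh (k - k1))).
  assert (Hq : 0 <= IZR k1 ^ 2 / IZR k ^ 2).
  { unfold Rdiv; destruct (Req_dec (IZR k ^ 2) 0) as [E|E].
    - rewrite E, Rinv_0; lra.
    - apply Rle_mult_inv_pos; [apply pow2_ge_0 | pose proof (pow2_ge_0 (IZR k)); lra]. }
  rewrite Rabs_pos_eq by exact Hq.
  set (q := IZR k1 ^ 2 / IZR k ^ 2) in *.
  set (mn := Rmin (IZR (k - k1) ^ 2) (Rabs (IZR k * IZR k1))) in *.
  replace (4 * tau ^ 2 * (q * mn * _ * _))
    with (q * (4 * tau ^ 2 * mn) * Cmod (conj_coef fh k1) * Cmod (conj_coef fh (k - k1))) by ring.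
  repeat apply Rmult_le_compat_r; auto; apply Rmult_le_compat_l; auto.
Qed.

Lemma isum_multiplier_le r s C fh k lo n : inH s fh ->
  (forall lo n, isum (kernel r s k) lo n <= C) ->
  isum (fun k1 => multiplier k k1 * Cmod (conj_coef fh k1) * Cmod (conj_coef fh (k - k1))) lo n
    <= sqrt (C / sob_w r k * conv_weight fh s k).
Proof.
  intros Hs HK.
  set (w := fun j => sob_w s j * sob_w s (k - j)).
  assert (Hw : forall j, 0 < w j) by (intros; apply Rmult_lt_0_compat; apply sob_w_pos).
  pose proof (sob_w_pos r k) as Hr.
  eapply Rle_trans; [apply Rle_abs|]; rewrite <- sqrt_Rsqr_abs; apply sqrt_le_1_alt.
  rewrite Rsqr_pow2.
  rewrite (isum_ext _
             (fun j => multiplier k j * (Cmod (conj_coef fh j) * Cmod (conj_coef fh (k - j)))))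
    by (intros; ring).
  eapply Rle_trans; [apply (isum_cauchy_schwarz _ _ w); exact Hw|].
  assert (Hpos : forall x a, Rpower x a <> 0) by (intros; apply Rgt_not_eq, Rpower_pos).
  rewrite (isum_ext (fun j => multiplier k j ^ 2 / w j) (fun j => / sob_w r k * kernel r s k j))
    by (intros j; unfold kernel, w, sob_w, jb; rewrite !Rpower_Ropp; field; auto).
  rewrite (isum_ext (fun j => w j * _ ^ 2)
             (fun j => conj_weight fh s j * conj_weight fh s (k - j)%Z))
    by (intros j; unfold w, conj_weight; ring).
  rewrite isum_scal.
  apply Rmult_le_compat.
  - apply Rmult_le_pos; [apply Rlt_le, Rinv_0_lt_compat, Hr|].
    apply isum_nonneg; intros; apply kernel_nonneg.
  - apply isum_nonneg; intros; apply conv_term_nonneg.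
  - unfold Rdiv; rewrite (Rmult_comm C).
    apply Rmult_le_compat_l; [apply Rlt_le, Rinv_0_lt_compat, Hr | apply HK].
  - apply isum_le_zsum; [intros; apply conv_term_nonneg | apply conv_summable, Hs].
Qed.

Lemma P1coef_weighted_le r s C tau fh k : 0 <= C -> 0 < tau -> inH s fh ->
  (k <> 0%Z -> forall lo n, isum (kernel r s k) lo n <= C) ->
  sob_w r k * Cmod (P1coef tau fh k) ^ 2 <= 32 * tau ^ 4 * C * conv_weight fh s k.
Proof.
  intros HC Htau Hs HK.
  assert (HV : 0 <= conv_weight fh s k).
  { apply zsum_nonneg; [intros; apply conv_term_nonneg | apply conv_summable, Hs]. }
  pose proof (sob_w_pos r k) as Hr; pose proof (pow_lt tau 4 Htau).
  destruct (Z.eq_dec k 0) as [->|Hk].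
  { unfold P1coef; simpl; rewrite Cmod_0; apply Rle_trans with 0; [lra|].
    apply Rmult_le_pos; [apply Rmult_le_pos|]; lra. }
  rewrite P1coef_neq0 by exact Hk.
  set (B := C / sob_w r k * conv_weight fh s k).
  assert (HB : 0 <= B)
    by (unfold B, Rdiv; apply Rmult_le_pos; [apply Rle_mult_inv_pos|]; lra).
  assert (Hmod : Cmod (zsumC (P1term tau fh k)) <= sqrt 2 * (4 * tau ^ 2 * sqrt B)).
  { apply Cmod_zsumC_le with (h := fun k1 => 4 * tau ^ 2
      * (multiplier k k1 * Cmod (conj_coef fh k1) * Cmod (conj_coef fh (k - k1)))).
    - intros k1; apply Cmod_P1term_le, Htau.
    - intros lo n; rewrite isum_scal; apply Rmult_le_compat_l; [nra|].
      apply isum_multiplier_le; auto. }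
  apply (fun H => pow_incr _ _ 2 (conj (Cmod_ge_0 _) H)) in Hmod.
  replace ((sqrt 2 * (4 * tau ^ 2 * sqrt B)) ^ 2) with (32 * tau ^ 4 * B) in Hmod
    by (rewrite !Rpow_mult_distr, !pow2_sqrt by lra; ring).
  apply Rle_trans with (sob_w r k * (32 * tau ^ 4 * B)); [apply Rmult_le_compat_l; lra|].
  right; unfold B; field; lra.
Qed.

Lemma P1coef_Hnorm_le r s C tau fh : 0 < tau -> inH s fh ->
  (forall k, k <> 0%Z -> forall lo n, isum (kernel r s k) lo n <= C) ->
  inH r (P1coef tau fh) /\
  Hnorm r (P1coef tau fh) <= sqrt (32 * C) * tau ^ 2 * Hnorm s fh ^ 2.
Proof.
  intros Htau Hs HK.
  assert (HC : 0 <= C) by exact (HK 1%Z ltac:(lia) 0%Z 0%nat).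
  pose proof (Hnorm2_nonneg fh s Hs) as HS; pose proof (pow_lt tau 4 Htau).
  set (T := fun k => sob_w r k * Cmod (P1coef tau fh k) ^ 2).
  assert (HT : forall k, 0 <= T k)
    by (intros k; apply Rmult_le_pos; [apply Rlt_le, sob_w_pos | apply pow2_ge_0]).
  destruct (zsum_le T HT (32 * tau ^ 4 * C * Hnorm2 s fh ^ 2)) as [Hsum Hle].
  { intros lo n; apply Rle_trans with (isum (fun k => 32 * tau ^ 4 * C * conv_weight fh s k) lo n).
    - apply isum_le; intros i _; apply P1coef_weighted_le; auto.
    - rewrite isum_scal; apply Rmult_le_compat_l; [nra | apply isum_conv_weight_le, Hs]. }
  split; [exact Hsum|].
  unfold Hnorm; rewrite pow2_sqrt by exact HS.
  eapply Rle_trans; [apply sqrt_le_1_alt, Hle|]; right.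
  replace (32 * tau ^ 4 * C * Hnorm2 s fh ^ 2)
    with ((32 * C) * (tau ^ 2 * Hnorm2 s fh) ^ 2) by ring.
  rewrite sqrt_mult_alt, sqrt_pow2 by (try apply Rmult_le_pos; nra); ring.
Qed.

(* These are the only properties of [s = r + p(r)] the estimate uses; the second one is an
   equality for 3/2 < r < 5/2. *)
Lemma p_eps_admissible r eps : 1 <= r -> 0 < eps < 1 / 100 ->
  r <= r + p_eps r eps /\ r + 5 / 2 <= 2 * (r + p_eps r eps) /\
  7 / 4 < r + p_eps r eps /\ r + p_eps r eps <> 5 / 2.
Proof.
  intros Hr Heps; unfold p_eps, p_base, p_plus.
  repeat destruct Rle_dec; repeat destruct Rlt_dec; repeat split; try intros ?; lra.
Qed.

Theorem lemma6 :
  forall r : R, 1 <= r ->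
  exists eps0 : R, 0 < eps0 /\
  forall eps : R, 0 < eps < eps0 ->
  exists K : R,
  forall (tau : R) (fh : Z -> C), 0 < tau ->
    inH (r + p_eps r eps) fh ->
    inH r (P1coef tau fh) /\
    Hnorm r (P1coef tau fh) <= K * tau ^ 2 * Hnorm (r + p_eps r eps) fh ^ 2.
Proof.
  intros r Hr; exists (1 / 100); split; [lra|]; intros eps Heps.
  destruct (p_eps_admissible r eps Hr Heps) as (Hs & Hr52 & Hs74 & Hs52).
  destruct (isum_kernel_bounded r (r + p_eps r eps) Hs Hr52 Hs74 Hs52) as [C HC].
  exists (sqrt (32 * C)); intros tau fh Htau Hf.
  apply P1coef_Hnorm_le; auto.
Qed.
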